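(* Let $A\in\mathbb{C}^{m\times n}$ have rank $r>0$ with $\mathrm{rank}(A^{\sim}A)=\mathrm{rank}(A)$, and let $A=BC$ be a full rank factorization of $A$, where $B\in\mathbb{C}^{m\times r}$ and $C\in\mathbb{C}^{r\times n}$ both have rank $r$. Then $$A\{1,2,3^{\mathfrak{m}}\}=\left\{C_R^{-1}(B^{\sim}B)^{-1}B^{\sim} : C_R^{-1}\in\mathbb{C}^{n\times r} \text{ is a right inverse of } C\right\}.$$
   Context: For a positive integer $k$, the Minkowski metric matrix of order $k$ is $G_k=\mathrm{diag}(1,-I_{k-1})$ (with $G_1=(1)$). For $A\in\mathbb{C}^{m\times n}$, the Minkowski adjoint is $A^{\sim}=G_nA^*G_m$, where $A^*$ is the conjugate transpose. For $A\in\mathbb{C}^{m\times n}$ and $X\in\mathbb{C}^{n\times m}$ consider the equations $(1)\ AXA=A$, $(2)\ XAX=X$, $(3^{\mathfrak{m}})\ (AX)^{\sim}=AX$, $(4^{\mathfrak{m}})\ (XA)^{\sim}=XA$; $A\{i,\dots,k\}$ denotes the set of all $X$ satisfying the listed equations. A right inverse of $C$ is a matrix $C_R^{-1}$ with $CC_R^{-1}=I_r$. *)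

From HB Require Import structures.
From mathcomp Require Import all_boot all_order all_algebra.
From mathcomp Require Import complex.
From mathcomp Require Import reals.
Set Implicit Arguments. Unset Strict Implicit. Unset Printing Implicit Defensive.
Import Order.TTheory GRing.Theory Num.Theory.
Local Open Scope ring_scope.
Local Open Scope complex_scope.

Definition minkG (F : ringType) (k : nat) : 'M[F]_k :=
  diag_mx (\row_(i < k) (if val i == 0%N then 1 else -1)).

Definition conjT (F : numClosedFieldType) (m n : nat) (A : 'M[F]_(m, n)) : 'M[F]_(n, m) :=
  map_mx Num.conj A^T.

(* Minkowski adjoint A^~ = G_n A^* G_m *)
Definition madj (F : numClosedFieldType) (m n : nat) (A : 'M[F]_(m, n)) : 'M[F]_(n, m) :=
  minkG F n *m conjT A *m minkG F m.

Definition in_A123m (F : numClosedFieldType) (m n : nat)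
    (A : 'M[F]_(m, n)) (X : 'M[F]_(n, m)) : Prop :=
  [/\ A *m X *m A = A, X *m A *m X = X & madj (A *m X) = A *m X].

From HB Require Import structures.
From mathcomp Require Import all_boot all_order all_algebra.
From mathcomp Require Import complex.
From mathcomp Require Import reals.
Import Order.TTheory GRing.Theory Num.Theory.
Local Open Scope ring_scope.
Local Open Scope complex_scope.

(* The Minkowski adjoint is an involutive anti-automorphism, so it behaves like
   the conjugate transpose.  Since rank (C^~ (B^~ B) C) = r, the r x r Gram
   matrix B^~ B is invertible, so B^+ := (B^~ B)^-1 B^~ is a left inverse of B
   with B B^+ self-adjoint.
   For a right inverse C_R of C, X := C_R B^+ gives A X = B B^+, whence
   (1), (2), (3^m).  Conversely, for X in A{1,2,3^m}, C_R := X B is a right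
   inverse of C (cancel B on the left by B^+ and C on the right, C being row
   free), and X = X (AX)^~ = X X^~ C^~ B^~ factors through B^~, which is
   fixed by right multiplication with B B^+. *)

Section MinkowskiAdjoint.
Context {F : numClosedFieldType}.

Lemma minkG_invol k : minkG F k *m minkG F k = 1%:M.
Proof.
apply/matrixP=> a b; rewrite /minkG mul_diag_mx !mxE.
have [->|_] := eqVneq a b; last by rewrite mulr0n mulr0.
by rewrite !mulr1n; case: ifP => _; rewrite ?mulr1 ?mulrNN ?mulr1.
Qed.

Lemma conjTM m n p (A : 'M[F]_(m, n)) (B : 'M[F]_(n, p)) :
  conjT (A *m B) = conjT B *m conjT A.
Proof. by rewrite /conjT trmx_mul map_mxM. Qed.

Lemma conjTK m n (A : 'M[F]_(m, n)) : conjT (conjT A) = A.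
Proof. exact: trmxCK. Qed.

Lemma conjT_minkG k : conjT (minkG F k) = minkG F k.
Proof.
apply/matrixP=> a b; rewrite /conjT /minkG !mxE.
have [->|_] := eqVneq a b; rewrite ?mulr0n ?conjC0 // ?mulr1n.
by case: (_ == _); rewrite ?rmorphN rmorph1.
Qed.

Lemma madjM m n p (A : 'M[F]_(m, n)) (B : 'M[F]_(n, p)) :
  madj (A *m B) = madj B *m madj A.
Proof.
rewrite /madj conjTM !mulmxA; congr (_ *m _).
by rewrite -!mulmxA (mulmxA (minkG F n)) minkG_invol mul1mx.
Qed.

Lemma madjK m n (A : 'M[F]_(m, n)) : madj (madj A) = A.
Proof.
rewrite /madj !conjTM conjTK !conjT_minkG.
by rewrite !mulmxA minkG_invol mul1mx -!mulmxA minkG_invol mulmx1.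
Qed.

Lemma madj1 n : madj (1%:M : 'M[F]_n) = 1%:M.
Proof. by rewrite /madj /conjT trmx1 map_mx1 mulmx1 minkG_invol. Qed.

Lemma madjV n (K : 'M[F]_n) : K \in unitmx -> madj (invmx K) = invmx (madj K).
Proof.
move=> Ku; have KVK : madj (invmx K) *m madj K = 1%:M.
  by rewrite -madjM mulmxV // madj1.
have [_ K'u] := mulmx1_unit KVK.
by rewrite -[LHS]mulmx1 -(mulmxV K'u) mulmxA KVK mul1mx.
Qed.

Lemma unitmx_madj_gram {m r n} (B : 'M[F]_(m, r)) (C : 'M[F]_(r, n)) :
  \rank (madj (B *m C) *m (B *m C)) = r -> madj B *m B \in unitmx.
Proof.
move=> rBC; rewrite -row_free_unit /row_free eqn_leq rank_leq_row /= -{1}rBC.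
rewrite madjM -mulmxA (mulmxA (madj B)).
exact: leq_trans (mxrankM_maxr _ _) (mxrankM_maxl _ _).
Qed.

End MinkowskiAdjoint.

Section MinkowskiLeftInverse.
Context {F : numClosedFieldType} {m r : nat} (B : 'M[F]_(m, r)).
Hypothesis gramB_unit : madj B *m B \in unitmx.

Definition mink_linv : 'M[F]_(r, m) := invmx (madj B *m B) *m madj B.

Lemma mink_linvK : mink_linv *m B = 1%:M.
Proof. by rewrite /mink_linv -mulmxA mulVmx. Qed.

Lemma madj_mul_mink_linv : madj (B *m mink_linv) = B *m mink_linv.
Proof.
rewrite /mink_linv; set K := madj B *m B.
have K_sa : madj K = K by rewrite /K madjM madjK.
by rewrite 2!madjM madjK madjV // K_sa -mulmxA.
Qed.

Lemma mulmx_mink_proj p (Y : 'M[F]_(p, r)) :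
  Y *m madj B *m (B *m mink_linv) = Y *m madj B.
Proof.
by rewrite /mink_linv mulmxA -(mulmxA Y (madj B) B) (mulmxA (Y *m _)) mulmxK.
Qed.

End MinkowskiLeftInverse.

Section FullRankFactorization.
Context {F : numClosedFieldType} {m n r : nat} {B : 'M[F]_(m, r)} {C : 'M[F]_(r, n)}.
Hypotheses (gramB_unit : madj B *m B \in unitmx) (C_row_free : row_free C).

Lemma A123m_of_right_inverse (CR : 'M[F]_(n, r)) :
  C *m CR = 1%:M -> in_A123m (B *m C) (CR *m mink_linv B).
Proof.
move=> CCR; have AX : B *m C *m (CR *m mink_linv B) = B *m mink_linv B.
  by rewrite -!mulmxA (mulmxA C) CCR mul1mx.
have LB := mink_linvK B gramB_unit.
split; rewrite ?AX ?madj_mul_mink_linv //.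
- by rewrite -mulmxA (mulmxA (mink_linv B)) LB mul1mx.
- by rewrite -mulmxA AX mulmxA -(mulmxA CR) LB mulmx1.
Qed.

Lemma A123m_right_inverse (X : 'M[F]_(n, m)) :
  in_A123m (B *m C) X -> C *m (X *m B) = 1%:M.
Proof.
case=> AXA _ _; have LBK p (Y : 'M[F]_(r, p)) : mink_linv B *m (B *m Y) = Y.
  by rewrite mulmxA mink_linvK // mul1mx.
apply: (row_free_inj C_row_free); rewrite /= mul1mx -[LHS]LBK -[RHS]LBK.
by congr (_ *m _); rewrite -AXA !mulmxA.
Qed.

Lemma A123m_factor (X : 'M[F]_(n, m)) :
  in_A123m (B *m C) X -> X = X *m B *m mink_linv B.
Proof.
case=> _ XAX AXsa.
have XBt : X = X *m madj X *m madj C *m madj B.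
  by rewrite -{1}XAX -mulmxA -AXsa !madjM !mulmxA.
by rewrite -mulmxA {2}XBt mulmx_mink_proj // -XBt.
Qed.

Lemma A123m_full_rank_factorization (X : 'M[F]_(n, m)) :
  in_A123m (B *m C) X <->
  exists CR : 'M[F]_(n, r), C *m CR = 1%:M /\ X = CR *m mink_linv B.
Proof.
split=> [XA | [CR [CCR ->]]]; last exact: A123m_of_right_inverse.
by exists (X *m B); split; [exact: A123m_right_inverse | exact: A123m_factor].
Qed.

End FullRankFactorization.

Theorem theorem4p4 (R : realType) (m n r : nat)
    (A : 'M[R[i]]_(m, n)) (B : 'M[R[i]]_(m, r)) (C : 'M[R[i]]_(r, n)) :
  \rank A = r -> (0 < r)%N ->
  \rank (madj A *m A) = \rank A ->
  A = B *m C -> \rank B = r -> \rank C = r ->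
  forall X : 'M[R[i]]_(n, m),
    in_A123m A X <->
    exists CR : 'M[R[i]]_(n, r),
      C *m CR = 1%:M /\ X = CR *m invmx (madj B *m B) *m madj B.
Proof.
move=> rA _ rAA eA _ rC X; subst A.
have gramB_unit : madj B *m B \in unitmx.
  by apply: (unitmx_madj_gram _ C); rewrite rAA.
have C_row_free : row_free C by rewrite /row_free rC.
apply: iff_trans (A123m_full_rank_factorization gramB_unit C_row_free X) _.
split=> -[CR [CCR ->]]; exists CR; split=> //; rewrite /mink_linv.
- exact: mulmxA.
- by rewrite [RHS]mulmxA.
Qed.
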